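(* Assume that $\hat R$ satisfies condition (ii) and let $\hat F\in\mathrm{Aut}(V\otimes V)$. Let $M$ and $M'$ be operators on $V$ with entries in a common associative algebra $\mathfrak A$, both half-quantum matrices, i.e. $S^{(2)}_{12}M_{\bar1}M_{\bar2}A^{(2)}_{12}=0$ and $S^{(2)}_{12}M'_{\bar1}M'_{\bar2}A^{(2)}_{12}=0$, and satisfying \[ \hat F_{12}M_1\hat F_{12}^{-1}M'_1=M'_1\hat F_{12}M_1\hat F_{12}^{-1}. \] Then the product $MM'$ (matrix product with entries in $\mathfrak A$) is again a half-quantum matrix: $S^{(2)}_{12}(MM')_{\bar1}(MM')_{\bar2}A^{(2)}_{12}=0$.
   Context: Let $V$ be a finite-dimensional complex vector space, $\mathrm{Id}$ the identity. For an operator $X$ on $V$ (possibly with entries in $\mathfrak A$), $X_j$ denotes $X$ acting in the $j$-th tensor factor of $V\otimes V$; for $Y$ on $V\otimes V$, $Y_{12}=Y$. Condition (ii): $q\in\mathbb C^*$ with $q+q^{-1}\ne0$ and $\hat R=qS^{(2)}-q^{-1}A^{(2)}$ with $S^{(2)},A^{(2)}$ idempotents on $V\otimes V$, $S^{(2)}+A^{(2)}=\mathrm{Id}$. For an $\mathfrak A$-valued $N$ on $V$: $N_{\bar1}:=N_1$, $N_{\bar2}:=\hat F_{12}N_1\hat F_{12}^{-1}$. *)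

From HB Require Import structures.
From mathcomp Require Import all_boot all_order all_algebra.
Set Implicit Arguments. Unset Strict Implicit. Unset Printing Implicit Defensive.
Import GRing.Theory.
Local Open Scope ring_scope.

(* V = K^n ; V (x) V = K^(n*n), the basis vector e_i (x) e_j having index
   mxvec_index i j (first tensor factor = first component). *)

Definition tens_pair (n : nat) (k : 'I_(n * n)) : 'I_n * 'I_n :=
  enum_val (cast_ord (esym (mxvec_cast n n)) k).

(* X_1 = X (x) Id, for an operator X on V with entries in an algebra A *)
Definition leg1 (R : pzRingType) (n : nat) (X : 'M[R]_n) : 'M[R]_(n * n) :=
  \matrix_(a, b) (if (tens_pair a).2 == (tens_pair b).2
                  then X (tens_pair a).1 (tens_pair b).1 else 0).

Definition liftA (K : fieldType) (A : algType K) (m : nat) (Y : 'M[K]_m)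
  : 'M[A]_m := map_mx (fun k : K => k%:A) Y.
Arguments liftA {K} A {m} Y.

Definition bar1 (K : fieldType) (A : algType K) (n : nat) (N : 'M[A]_n)
  : 'M[A]_(n * n) := leg1 N.

Definition bar2 (K : fieldType) (A : algType K) (n : nat)
  (F : 'M[K]_(n * n)) (N : 'M[A]_n) : 'M[A]_(n * n) :=
  liftA A F *m leg1 N *m liftA A (invmx F).

Definition half_quantum (K : fieldType) (A : algType K) (n : nat)
  (S2 A2 F : 'M[K]_(n * n)) (N : 'M[A]_n) : Prop :=
  liftA A S2 *m bar1 N *m bar2 F N *m liftA A A2 = 0.

Definition condition_ii (K : fieldType) (n : nat) (q : K)
  (Rhat S2 A2 : 'M[K]_(n * n)) : Prop :=
  [/\ q != 0, q + q^-1 != 0, Rhat = q *: S2 - q^-1 *: A2 &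
      [/\ S2 *m S2 = S2, A2 *m A2 = A2 & S2 + A2 = 1%:M]].

From HB Require Import structures.
From mathcomp Require Import all_boot all_order all_algebra.
Import GRing.Theory.
Local Open Scope ring_scope.

(* Write P = M_1, P' = M'_1, Q = M_{bar2}, Q' = M'_{bar2},
   so the hypothesis reads Q P' = P' Q.  The argument has two parts.
   1. Functoriality: both legs are multiplicative in N, i.e.
      (MM')_1 = M_1 M'_1 (a reindexing of the sum over V (x) V) and
      (MM')_{bar2} = M_{bar2} M'_{bar2} (conjugation by the invertible F,
      lifted to scalars of the algebra).
   2. A purely ring-theoretic computation: if S + A = 1 and S X A = 0 then
      X A = A X A, hence
        S P P' Q Q' A = S P Q P' Q' A = S P Q A P' Q' A = 0. *)

Section TensorIndex.
Variable n : nat.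

Lemma tens_pair_bij : bijective (@tens_pair n).
Proof.
exists (fun p => cast_ord (mxvec_cast n n) (enum_rank p)) => [k | p].
  by rewrite /tens_pair enum_valK cast_ordKV.
by rewrite /tens_pair cast_ordK enum_rankK.
Qed.

Lemma sum_tens (R : nmodType) (G : 'I_n -> 'I_n -> R) :
  \sum_(k < n * n) G (tens_pair k).1 (tens_pair k).2 = \sum_i \sum_j G i j.
Proof.
have [g pairK gK] := tens_pair_bij.
rewrite (reindex g); last by exists (@tens_pair n) => p _; [exact: gK | exact: pairK].
under eq_bigr => p _ do rewrite gK.
by rewrite -(pair_big predT predT G).
Qed.

End TensorIndex.

Lemma leg1M (R : pzRingType) n (M M' : 'M[R]_n) :
  leg1 (M *m M') = leg1 M *m leg1 M'.
Proof.
apply/matrixP => a b; rewrite !mxE.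
under [RHS]eq_bigr do rewrite !mxE.
rewrite (@sum_tens n _ (fun c1 c2 =>
  (if (tens_pair a).2 == c2 then M (tens_pair a).1 c1 else 0) *
  (if c2 == (tens_pair b).2 then M' c1 (tens_pair b).1 else 0))).
case: eqP => [e | ne].
  apply: eq_bigr => c1 _; rewrite (bigD1 (tens_pair a).2) //= eqxx e eqxx.
  by rewrite big1 ?addr0 // => c2 /negPf; rewrite eq_sym => ->; rewrite mul0r.
rewrite big1 // => c1 _; apply: big1 => c2 _.
case: eqP => [<- | _]; last by rewrite mul0r.
by case: eqP => [/ne [] | _]; rewrite mulr0.
Qed.

Section LiftScalars.
Variables (K : fieldType) (Alg : algType K).

Lemma liftAM m (X Y : 'M[K]_m) :
  liftA Alg (X *m Y) = liftA Alg X *m liftA Alg Y.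
Proof. exact: (map_mxM (in_alg Alg)). Qed.

Lemma liftAD m (X Y : 'M[K]_m) : liftA Alg (X + Y) = liftA Alg X + liftA Alg Y.
Proof. exact: (map_mxD (in_alg Alg)). Qed.

Lemma liftA1 m : liftA Alg (1%:M : 'M[K]_m) = 1%:M.
Proof. by rewrite /liftA (map_scalar_mx (in_alg Alg)) /= scale1r. Qed.

Lemma liftA_invmx m (F : 'M[K]_m) :
  F \in unitmx -> liftA Alg (invmx F) *m liftA Alg F = 1%:M.
Proof. by move=> Fu; rewrite -liftAM mulVmx // liftA1. Qed.

Lemma bar2M n (F : 'M[K]_(n * n)) (M M' : 'M[Alg]_n) :
  F \in unitmx -> bar2 F (M *m M') = bar2 F M *m bar2 F M'.
Proof.
move=> Fu; rewrite /bar2 leg1M !mulmxA.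
by rewrite -[_ *m liftA Alg (invmx F) *m liftA Alg F]mulmxA liftA_invmx // mulmx1.
Qed.

End LiftScalars.

Section ProductRule.
Variables (R : pzRingType) (m : nat) (S A : 'M[R]_m).
Hypothesis SA1 : S + A = 1%:M.

Lemma annihilated_absorb (X : 'M[R]_m) : S *m X *m A = 0 -> X *m A = A *m X *m A.
Proof. by move=> h; rewrite -[X *m A]mul1mx -SA1 mulmxDl !mulmxA h add0r. Qed.

(* The algebraic core: commuting Q past P' and inserting A between the
   two annihilated blocks shows that S (P P') (Q Q') A vanishes. *)
Lemma product_annihilated (P Q P' Q' : 'M[R]_m) :
  S *m P *m Q *m A = 0 -> S *m P' *m Q' *m A = 0 ->
  Q *m P' = P' *m Q ->
  S *m (P *m P') *m (Q *m Q') *m A = 0.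
Proof.
move=> h h' commQ.
have absorb : P' *m Q' *m A = A *m (P' *m Q') *m A.
  by apply: annihilated_absorb; rewrite !mulmxA.
have -> : S *m (P *m P') *m (Q *m Q') *m A = S *m P *m (Q *m P') *m Q' *m A.
  by rewrite commQ !mulmxA.
have -> : S *m P *m (Q *m P') *m Q' *m A = S *m P *m Q *m (P' *m Q' *m A).
  by rewrite !mulmxA.
by rewrite absorb !mulmxA h !mul0mx.
Qed.

End ProductRule.

Theorem mainTheorem8 (K : fieldType) (Alg : algType K) (n : nat) (q : K)
  (Rhat S2 A2 F : 'M[K]_(n * n)) (M M' : 'M[Alg]_n) :
  condition_ii q Rhat S2 A2 ->
  F \in unitmx ->
  half_quantum S2 A2 F M ->
  half_quantum S2 A2 F M' ->
  liftA Alg F *m leg1 M *m liftA Alg (invmx F) *m leg1 M'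
    = leg1 M' *m liftA Alg F *m leg1 M *m liftA Alg (invmx F) ->
  half_quantum S2 A2 F (M *m M').
Proof.
case=> _ _ _ [_ _ SA] Fu hM hM' twisted_comm.
have SA1 : liftA Alg S2 + liftA Alg A2 = 1%:M by rewrite -liftAD SA liftA1.
rewrite /half_quantum /bar1 leg1M bar2M //.
apply: product_annihilated => //.
by rewrite /bar2 twisted_comm !mulmxA.
Qed.
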